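(* Let $G$ be a bipartite graph without isolated vertices, with at least two vertices, such that $\mathrm{Ind}(G)$ is pure and $G$ has a cross-free pure order. Then for any pure order $\{x_1,\ldots,x_n\}$, $\{y_1,\ldots,y_n\}$ of $G$ there exist indices $i,j$ with $\deg_G x_i=1$ and $\deg_G y_j=1$.
   Context: $\mathrm{Ind}(G)$ is the complex of independent sets of $G$. A pure order of such $G$ is a partition of the vertices into independent sets $\{x_1,\ldots,x_n\}$, $\{y_1,\ldots,y_n\}$ with (1) $x_iy_i$ an edge for all $i$ and (2) $x_iy_j,x_jy_k$ edges with $i,j,k$ distinct implies $x_iy_k$ an edge. A pure order has a cross if there are $i\ne j$ with both $x_iy_j$ and $x_jy_i$ edges; otherwise it is cross-free. The degree of a vertex is the number of its neighbours. *)

From mathcomp Require Import all_boot.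

Set Implicit Arguments. Unset Strict Implicit. Unset Printing Implicit Defensive.

Section Graph.
Variable T : finType.
Variable e : rel T.

Definition simple_graph : Prop := symmetric e /\ irreflexive e.

Definition independent (A : {set T}) : Prop :=
  forall u v, u \in A -> v \in A -> ~~ e u v.

(* maximal independent sets = facets of Ind(G) *)
Definition maximal_independent (A : {set T}) : Prop :=
  independent A /\ forall v, v \notin A -> ~ independent (v |: A).

Definition Ind_pure : Prop :=
  forall A B, maximal_independent A -> maximal_independent B -> #|A| = #|B|.

Definition bipartite : Prop :=
  exists A : {set T}, independent A /\ independent (~: A).

Definition no_isolated : Prop := forall u, exists v, e u v.

Definition deg (u : T) : nat := #|[set v | e u v]|.

Definition pure_order (n : nat) (x y : 'I_n -> T) : Prop :=
  injective x /\ injective y /\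
      (forall i j, x i <> y j) /\
      (forall v, (exists i, x i = v) \/ (exists j, y j = v)) /\
      independent [set x i | i in 'I_n] /\
      independent [set y i | i in 'I_n] /\
      (forall i, e (x i) (y i)) /\
      (forall i j k, i <> j -> j <> k -> i <> k ->
          e (x i) (y j) -> e (x j) (y k) -> e (x i) (y k)).

Definition has_cross (n : nat) (x y : 'I_n -> T) : Prop :=
  exists i j, i <> j /\ e (x i) (y j) /\ e (x j) (y i).

Definition cross_free (n : nat) (x y : 'I_n -> T) : Prop := ~ has_cross x y.

End Graph.

From mathcomp Require Import all_boot.

(* A cross-free pure order (x, y) induces a strict partial order on indices,
   i <| j iff i <> j and x_i ~ y_j: transitivity is condition (2) of a pure
   order, and cross-freeness rules out i <| j <| i.  If x_k is maximal for this
   order, its only neighbour is y_k, and dually a minimal y_k is a leaf.  Along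
   an order step i <| j the vertices x_i, y_j, x_j form a path, so x_i and x_j
   lie on the same side of any proper 2-colouring; hence a maximal element above
   any x_i on a given side gives a leaf on that side.  The sides {x_i} and {y_j}
   of an arbitrary pure order form such a 2-colouring, so each contains a leaf. *)

Set Implicit Arguments.
Unset Strict Implicit.
Unset Printing Implicit Defensive.

Lemma exists_maximal (T : finType) (r : rel T) (A : {pred T}) a :
  irreflexive r -> transitive r ->
  (forall i j, r i j -> i \in A -> j \in A) -> a \in A ->
  exists2 k, k \in A & forall j, ~~ r k j.
Proof.
move=> irr tr closedA Aa.
have [k Ak kmax] := arg_maxnP (fun k => #|[set j | r j k]|) Aa.
exists k => // j; apply/negP => rkj.
have below_proper : [set i | r i k] \proper [set i | r i j].
  apply/properP; split; last by exists k; rewrite !inE ?rkj ?irr.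
  by apply/subsetP => i; rewrite !inE => rik; apply: tr rkj.
by have := leq_trans (proper_card below_proper) (kmax j (closedA _ _ rkj Ak));
  rewrite ltnn.
Qed.

Definition bicolouring (T : finType) (e : rel T) (p : pred T) : Prop :=
  forall u w, e u w -> p u = ~~ p w.

Lemma cross_free_swap (T : finType) (e : rel T) n (x y : 'I_n -> T) :
  symmetric e -> cross_free e x y -> cross_free e y x.
Proof.
move=> sym cf [i [j [nij [eij eji]]]]; apply: cf.
by exists i, j; rewrite sym eji sym eij.
Qed.

Section PureOrder.

Variables (T : finType) (e : rel T) (n : nat) (x y : 'I_n -> T).
Hypothesis sym : symmetric e.
Hypothesis po : pure_order e x y.

Lemma pure_order_swap : pure_order e y x.
Proof.
have [ix [iy [dxy [cov [indx [indy [diag tr]]]]]]] := po.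
do 2!split=> //; split; first by move=> i j /esym; apply: dxy.
split; first by move=> v; case: (cov v); [right | left].
do 3!split=> //; first by move=> i; rewrite sym.
move=> i j k nij njk nik; rewrite !(sym (y _)) => eji ekj.
by apply: tr ekj eji => // /esym.
Qed.

Lemma pure_order_xx i j : ~~ e (x i) (x j).
Proof. by have [_ [_ [_ [_ [indx _]]]]] := po; apply: indx; apply: imset_f. Qed.

Lemma pure_order_yy i j : ~~ e (y i) (y j).
Proof. by have [_ [_ [_ [_ [_ [indy _]]]]]] := po; apply: indy; apply: imset_f. Qed.

Lemma pure_order_side_edge u w : e u w ->
  (u \in [set x i | i in 'I_n]) = (w \notin [set x i | i in 'I_n]).
Proof.
have [_ [_ [dxy [cov _]]]] := po.
have yX j : y j \notin [set x i | i in 'I_n].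
  by apply/imsetP => -[i _ /esym]; apply: dxy.
case: (cov u) => -[i <-]; case: (cov w) => -[j <-] /=;
  rewrite ?imset_f ?(negbTE (yX _)) //.
- by rewrite (negbTE (pure_order_xx i j)).
- by rewrite (negbTE (pure_order_yy i j)).
Qed.

Section CrossFree.

Hypothesis cf : cross_free e x y.

Definition below (i j : 'I_n) := (i != j) && e (x i) (y j).

Lemma below_irr : irreflexive below.
Proof. by move=> i; rewrite /below eqxx. Qed.

Lemma below_trans : transitive below.
Proof.
have [_ [_ [_ [_ [_ [_ [_ tr]]]]]]] := po.
move=> j i k /andP[/eqP nij eij] /andP[/eqP njk ejk].
have /eqP nik : i != k.
  by apply/eqP => ik; subst k; apply: cf; exists i, j.
by rewrite /below; apply/andP; split; [apply/eqP | apply: tr ejk].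
Qed.

Lemma deg_maximal k : (forall j, ~~ below k j) -> deg e (x k) = 1.
Proof.
have [_ [iy [dxy [cov [_ [_ [diag _]]]]]]] := po.
move=> kmax; rewrite /deg (_ : [set w | e (x k) w] = [set y k]) ?cards1 //.
apply/setP => w; rewrite !inE; case: (cov w) => -[j <-].
  by rewrite (negbTE (pure_order_xx k j)); apply/esym/eqP/dxy.
rewrite (inj_eq iy); have [-> | njk] := eqVneq j k; first by rewrite diag.
by apply/negbTE; have := kmax j; rewrite /below eq_sym njk.
Qed.

Lemma leaf_of_colour_x (p : pred T) a :
  bicolouring e p -> p (x a) -> exists2 k, p (x k) & deg e (x k) = 1.
Proof.
have [_ [_ [_ [_ [_ [_ [diag _]]]]]]] := po.
move=> colour pxa.
have closed i j : below i j -> p (x i) -> p (x j).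
  by case/andP=> _ eij; rewrite (colour _ _ eij) (colour _ _ (diag j)).
have [k pxk kmax] := exists_maximal below_irr below_trans closed pxa.
by exists k => //; apply: deg_maximal.
Qed.

End CrossFree.

End PureOrder.

Lemma leaf_of_colour (T : finType) (e : rel T) n (x y : 'I_n -> T)
    (p : pred T) v :
  symmetric e -> pure_order e x y -> cross_free e x y ->
  bicolouring e p -> p v -> exists2 w, p w & deg e w = 1.
Proof.
move=> sym po cf colour pv; have [_ [_ [_ [cov _]]]] := po.
case: (cov v) => -[a eav]; subst v.
  by have [k] := leaf_of_colour_x po cf colour pv; exists (x k).
have [k] := leaf_of_colour_x (pure_order_swap sym po) (cross_free_swap sym cf)
  colour pv.
by exists (y k).
Qed.

Theorem lemma4p7 (T : finType) (e : rel T) :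
  simple_graph e -> bipartite e -> no_isolated e -> 2 <= #|T| ->
  Ind_pure e ->
  (exists (m : nat) (x0 y0 : 'I_m -> T), pure_order e x0 y0 /\ cross_free e x0 y0) ->
  forall (n : nat) (x y : 'I_n -> T), pure_order e x y ->
    exists i j : 'I_n, deg e (x i) = 1 /\ deg e (y j) = 1.
Proof.
move=> [sym _] _ _ twoT _ [m [x0 [y0 [po0 cf0]]]] n x y po.
have [_ [_ [dxy [cov _]]]] := po.
pose X := [set x i | i in 'I_n].
have xX i : x i \in X by apply: imset_f.
have colourX : bicolouring e [pred u | u \in X] := pure_order_side_edge po.
have colourY : bicolouring e [pred u | u \notin X].
  by move=> u w euw; rewrite /= (pure_order_side_edge po euw) negbK.
have [v _] : exists v : T, true by apply/card_gt0P; apply: leq_trans twoT.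
have [i0 _] : exists i : 'I_n, true by case: (cov v) => -[i _]; exists i.
have [_ /imsetP[i _ ->] degxi] :=
  leaf_of_colour sym po0 cf0 colourX (xX i0).
have yX : y i0 \notin X by apply/imsetP => -[j _ /esym]; apply: dxy.
have [w wY degw] := leaf_of_colour sym po0 cf0 colourY yX.
case: (cov w) => -[j wj]; subst w; first by rewrite /= xX in wY.
by exists i, j.
Qed.
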